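(* Let $2/5 < r < 1$, put $p = \left\lceil \frac{5r-2}{1-r} \right\rceil$ and $\alpha = p - \frac{5r-2}{1-r}$, and let $\alpha = (0.\alpha_1 \alpha_2 \cdots)_2$ be the binary expansion of $\alpha$ with infinitely many zero digits. Define binary words $w^{\langle 0 \rangle} = \emptyset$ and $w^{\langle i \rangle} = w^{\langle i-1 \rangle} w^{\langle i-1 \rangle}\, 01011\, 0^{p - \alpha_i}$ for $i \geq 1$; each $w^{\langle i \rangle}$ is a proper prefix of $w^{\langle i+1 \rangle}$, and let $w$ be the infinite binary word which is the limit of this sequence. Then $\lim_{n \to \infty} |P(w^{(n)})|/n = (5r-2)/3$.
   Context: For a binary word $x$, $x^j$ denotes $j$ concatenated copies of $x$ ($x^0$ is empty), and juxtaposition denotes concatenation. $w^{(n)}$ denotes the initial subword of length $n$ of $w$. For a binary word $u = u_1 \cdots u_\ell$ of length $\ell$, $P(u)$ is the set of indices $i \geq 2$ such that at least one of the following holds: (i) $\ell \geq i$ and $u_{i-1} u_i = 00$; (ii) $\ell \geq i+2$ and $u_{i-1} u_i u_{i+1} u_{i+2} = 0100$; (iii) $\ell \geq i+3$ and $u_{i-1} \cdots u_{i+3} = 01010$. *)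

From HB Require Import structures.
From mathcomp Require Import all_boot all_order all_algebra.
From mathcomp Require Import all_classical all_reals all_analysis.
Set Implicit Arguments. Unset Strict Implicit. Unset Printing Implicit Defensive.
Import Order.TTheory GRing.Theory Num.Theory.
Local Open Scope ring_scope.

(* Binary words are sequences of naturals over {0,1}.  Letters are
   1-indexed as in the paper: u_k = nth 0 u (k-1). *)
Definition letter (u : seq nat) (k : nat) : nat := nth 0%N u k.-1.

Definition inP (u : seq nat) (i : nat) : bool :=
  let l := size u in
  [&& (2 <= i)%N &
   [|| ((i <= l)%N && (letter u i.-1 == 0%N) && (letter u i == 0%N)),
       [&& (i + 2 <= l)%N, letter u i.-1 == 0%N, letter u i == 1%N,
           letter u i.+1 == 0%N & letter u i.+2 == 0%N]
     | [&& (i + 3 <= l)%N, letter u i.-1 == 0%N, letter u i == 1%N,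
           letter u i.+1 == 0%N, letter u i.+2 == 1%N & letter u i.+3 == 0%N]]].

(* |P(u)|: all elements of P(u) lie in {2, ..., l}. *)
Definition cardP (u : seq nat) : nat := count (inP u) (iota 2 (size u).-1).

Section Construction.
Variables (R : realType) (r : R).

Definition pp : int := Num.ceil ((5 * r - 2) / (1 - r)).

Definition alpha : R := pp%:~R - (5 * r - 2) / (1 - r).

(* i-th binary digit (i >= 1) of the expansion of alpha in [0,1) with
   infinitely many zeros: alpha_i = floor(2^i alpha) mod 2. *)
Definition alpha_digit (i : nat) : int := ((Num.floor (2 ^+ i * alpha)) %% 2)%Z.

Fixpoint wblock (i : nat) : seq nat :=
  match i with
  | 0 => [::]
  | i'.+1 => wblock i' ++ wblock i' ++ [:: 0; 1; 0; 1; 1]%N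
             ++ nseq `|pp - alpha_digit i|%N 0%N
  end.

(* The infinite limit word: its n-th letter (0-indexed) is read off
   w^<n+1>, which has length > n and is a prefix of all later w^<j>. *)
Definition winf (n : nat) : nat := nth 0%N (wblock n.+1) n.

Definition wprefix (n : nat) : seq nat := mkseq winf n.

End Construction.

From HB Require Import structures.
From mathcomp Require Import all_boot all_order all_algebra.
From mathcomp Require Import all_classical all_reals all_analysis.
From mathcomp Require Import zify ring lra.
Import Order.TTheory GRing.Theory Num.Theory.
Import numFieldNormedType.Exports.
Local Open Scope ring_scope.
Local Open Scope classical_set_scope.

(* A position contributes to P exactly when 00, 0100 or 01010 starts there.  In
   w^<i> = w^<i-1> w^<i-1> 01011 0^k every copy of w^<i-1> is followed by a word
   starting with 0101, so the patterns start exactly at the k zeros of the new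
   spacer 01011 0^k and inside the two copies.  Hence the count c_i and length
   l_i of w^<i> obey c_i = 2 c_(i-1) + p - alpha_i and
   l_i = 2 l_(i-1) + 5 + p - alpha_i, giving c_i = p (2^i - 1) - floor(2^i alpha)
   and l_i = (5 + p) (2^i - 1) - floor(2^i alpha); the choice of alpha makes
   |c_i - rho l_i| <= 1 for rho = (5r - 2)/3.  A prefix of length n is peeled
   into at most log2 n complete blocks and one partial spacer, so its count is
   rho n + O(log n). *)

Definition Ptrigger (s : seq nat) : bool :=
  match s with
  | 0 :: 0 :: _ | 0 :: 1 :: 0 :: 0 :: _ | 0 :: 1 :: 0 :: 1 :: 0 :: _ => true
  | _ => false
  end%N.

Ltac case_word s :=
  case: s => [|[|[|?]] [|[|[|?]] [|[|[|?]] [|[|[|?]] [|[|[|?]] ?]]]]].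

Lemma inP_drop i u : inP u i.+2 = Ptrigger (drop i u).
Proof.
elim: i u => [|i IH] u; first by rewrite drop0 /inP /letter; case_word u.
by case: u => [|a u] //; rewrite -IH.
Qed.

Definition Pcount (n : nat) (s : seq nat) : nat :=
  count (fun i => Ptrigger (drop i s)) (iota 0 n).

Lemma Ptrigger_take_le k s : (Ptrigger (take k s) <= Ptrigger s)%N.
Proof. by case: k => [|[|[|[|[|k]]]]]; case_word s. Qed.

Lemma Ptrigger_take k s : (4 < k)%N -> Ptrigger (take k s) = Ptrigger s.
Proof. by case: k => [|[|[|[|[|k]]]]] //; case_word s. Qed.

Lemma PcountD m n s : Pcount (m + n) s = (Pcount m s + Pcount n (drop m s))%N.
Proof.
rewrite /Pcount iotaD count_cat add0n -[X in iota X n]addn0 iotaDl count_map.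
by congr (_ + _)%N; apply: eq_count => i /=; rewrite drop_drop addnC.
Qed.

Lemma PcountS n s : Pcount n.+1 s = (Ptrigger s + Pcount n (behead s))%N.
Proof. by rewrite -add1n PcountD drop1 {1}/Pcount /= drop0 addn0. Qed.

Lemma Pcount_le n s : (Pcount n s <= n)%N.
Proof. by rewrite /Pcount -[X in (_ <= X)%N](size_iota 0 n) count_size. Qed.

Lemma cardP_Pcount u : cardP u = Pcount (size u) u.
Proof.
have -> : cardP u = Pcount (size u).-1 u.
  rewrite /cardP -(addn0 2%N) iotaDl count_map; apply: eq_count => i /=.
  by rewrite add2n inP_drop.
case: u => [|a v] //=; rewrite -[in RHS](addn1 (size v)) PcountD {3}/Pcount /=.
have : size (drop (size v) (a :: v)) = 1%N by rewrite size_drop /= subSnn.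
by case: drop => [|[|[|x]] [|y t]] //= _; rewrite !addn0.
Qed.

Lemma Pcount_take n s :
  (Pcount n (take n s) <= Pcount n s <= Pcount n (take n s) + 4)%N.
Proof.
elim: n s => [|n IH] s //; rewrite !PcountS.
have -> : behead (take n.+1 s) = take n (behead s) by case: s.
have /andP[lo hi] := IH (behead s); apply/andP; split.
  by rewrite leq_add ?Ptrigger_take_le.
case: (ltnP 3 n) => [n_gt3 | n_le3].
  by rewrite Ptrigger_take // -addnA leq_add2l.
by rewrite -PcountS; apply: leq_trans (Pcount_le _ _) _; lia.
Qed.

Lemma floor_double (R : archiRealFieldType) (y : R) :
  Num.floor (2 * y) = 2 * Num.floor y + (Num.floor (2 * y) %% 2)%Z.
Proof.
set a := Num.floor y; set c := Num.floor (2 * y).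
have lo : 2 * a <= c.
  rewrite /c floor_ge_int rmorphM /=; have := floor_le y; rewrite -/a; lra.
have hi : c < 2 * a + 2.
  rewrite /c floor_lt_int rmorphD rmorphM /=.
  have := floorD1_gt y; rewrite -/a rmorphD /=; lra.
have -> : (c %% 2)%Z = c - 2 * a.
  rewrite {1}(_ : c = a * 2 + (c - 2 * a)); last by ring.
  by rewrite modzMDl modz_small //; apply/andP; split; lia.
ring.
Qed.

Definition spacer (k : nat) : seq nat := [:: 0; 1; 0; 1; 1]%N ++ nseq k 0%N.

Definition starts0101 (s : seq nat) : Prop := exists t, s = [:: 0, 1, 0, 1 & t]%N.

Lemma starts0101_spacer k s : starts0101 (spacer k ++ s).
Proof. by eexists. Qed.

Lemma Pcount_spacer k s : Pcount (size (spacer k)) (spacer k ++ 0%N :: s) = k.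
Proof.
rewrite /spacer size_cat size_nseq -catA PcountD drop_size_cat //.
rewrite [Pcount 5 _](_ : _ = 0%N) // add0n.
elim: k => [|k IH] //; rewrite PcountS /= IH.
by case: k {IH}.
Qed.

Lemma trunc_log2_lt m n :
  (0 < m)%N -> (2 * m <= n)%N -> (trunc_log 2 m < trunc_log 2 n)%N.
Proof. by move=> m_gt0 le_2m_n; rewrite -trunc_log2_double // leq_trunc_log // -mul2n. Qed.

Lemma sqr_succ_le_exp2 l : ((1 + l) ^ 2 <= 8 * 2 ^ l)%N.
Proof.
elim: l => [|[|[|l]] IH] //; move: IH.
rewrite !expnS; set a := (2 ^ l)%N; nia.
Qed.

Lemma sqr_trunc_log2_le n : (0 < n)%N -> ((1 + trunc_log 2 n) ^ 2 <= 8 * n)%N.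
Proof.
move=> n_gt0; apply: leq_trans (sqr_succ_le_exp2 _) _.
by rewrite leq_mul2l trunc_logP.
Qed.

Lemma cvg_div_of_log_dev (R : realType) (x : nat -> R) (c M : R) :
  (forall n, `|x n - c * n%:R| <= M * (1 + trunc_log 2 n)%:R) ->
  (fun n => x n / n%:R) @ \oo --> c.
Proof.
move=> dev; apply/cvgrPdist_le => e e_gt0.
have M_ge0 : 0 <= M.
  by have := dev 0%N; rewrite trunc_log0 addn0 mulr1; apply: le_trans.
(* As (1 + log2 n)^2 <= 8 n, M (1 + log2 n) <= e n once n > 8 M^2 / e^2. *)
exists (Num.truncn (8 * M ^+ 2 / e ^+ 2)).+1 => // n /= N_lt_n.
have n_gt0 : (0 < n)%N by case: n N_lt_n.
have n_gt0' : 0 < n%:R :> R by rewrite ltr0n.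
have e2_gt0 : 0 < e ^+ 2 by rewrite exprn_gt0.
have N_lt : 8 * M ^+ 2 / e ^+ 2 < n%:R.
  by rewrite -truncn_lt_nat // divr_ge0 ?mulr_ge0 ?sqr_ge0 // ltW.
rewrite ltr_pdivrMr // in N_lt.
set t : R := (1 + trunc_log 2 n)%:R.
have t_ge0 : 0 <= t by [].
have t_sqr : t ^+ 2 <= 8 * n%:R by rewrite -natrX -(natrM _ 8) ler_nat sqr_trunc_log2_le.
have -> : c - x n / n%:R = - ((x n - c * n%:R) / n%:R) by field; rewrite lt0r_neq0.
rewrite normrN normrM normfV (ger0_norm (ltW n_gt0')) ler_pdivrMr //.
apply: le_trans (dev n) _; rewrite -/t -ler_sqr ?nnegrE ?mulr_ge0 //; last exact: ltW.
by rewrite !exprMn; nra.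
Qed.

Section LimitWord.
Variables (R : realType) (r : R).

Local Notation p := (pp r).

Definition nzeros (j : nat) : nat := `|p - alpha_digit r j|%N.

Lemma wblockS j : wblock r j.+1 = wblock r j ++ wblock r j ++ spacer (nzeros j.+1).
Proof. by []. Qed.

Lemma starts0101_wblock j s : starts0101 s -> starts0101 (wblock r j ++ s).
Proof.
elim: j s => [|j IH] s // s0101.
by rewrite wblockS -!catA; apply/IH/IH/starts0101_spacer.
Qed.

Fixpoint wcount (j : nat) : nat :=
  if j is j'.+1 then (2 * wcount j' + nzeros j) else 0%N.

Lemma Pcount_wblock j s :
  starts0101 s -> Pcount (size (wblock r j)) (wblock r j ++ s) = wcount j.
Proof.
elim: j s => [|j IH] s s0101 //.
have sT : starts0101 (spacer (nzeros j.+1) ++ s) := starts0101_spacer _ _.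
have sWT := starts0101_wblock j _ sT.
rewrite wblockS -2!catA 2!size_cat !PcountD !drop_size_cat // !IH //.
by case: s0101 => t ->; rewrite Pcount_spacer /= mul2n -addnn addnA.
Qed.

Lemma size_wblock_ge j : (j <= size (wblock r j))%N.
Proof. by elim: j => [|j IH] //; rewrite wblockS !size_cat /=; lia. Qed.

Lemma wblock_prefix j m : (j <= m)%N -> exists s, wblock r m = wblock r j ++ s.
Proof.
move=> /subnK <-; elim: (m - j)%N => [|d [s IH]]; first by exists [::]; rewrite cats0.
by rewrite addSn wblockS IH -catA; eexists.
Qed.

Lemma wprefix_take n : wprefix r n = take n (wblock r n).
Proof.
apply: (@eq_from_nth _ 0%N).
  by rewrite size_mkseq size_take_min; apply/esym/minn_idPl/size_wblock_ge.
move=> i; rewrite size_mkseq => lt_i_n.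
rewrite nth_mkseq // nth_take // /winf.
have [s ->] := wblock_prefix _ _ lt_i_n.
by rewrite nth_cat size_wblock_ge.
Qed.

Definition alpha_floor (j : nat) : int := Num.floor (2 ^+ j * alpha r).

Lemma alpha_floorS j : alpha_floor j.+1 = 2 * alpha_floor j + alpha_digit r j.+1.
Proof. by rewrite /alpha_floor /alpha_digit exprS -mulrA {1}floor_double. Qed.

Lemma alpha_itv : 0 <= alpha r < 1.
Proof.
rewrite /alpha /pp; have /andP[] := ceil_itv ((5 * r - 2) / (1 - r)).
rewrite rmorphB /=; lra.
Qed.

Lemma alpha_floor0 : alpha_floor 0 = 0.
Proof. by rewrite /alpha_floor expr0 mul1r; apply: floor_def; rewrite add0r alpha_itv. Qed.

Lemma alpha_floor_bounds j :
  (alpha_floor j)%:~R <= 2 ^+ j * alpha r < (alpha_floor j)%:~R + 1.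
Proof. by rewrite /alpha_floor floor_le -[1]/(1%:~R) -rmorphD floorD1_gt. Qed.

Lemma alpha_digit_01 j : 0 <= alpha_digit r j <= 1.
Proof. by rewrite /alpha_digit modz_ge0 //= -ltzD1 ltz_pmod. Qed.

Hypotheses (r_gt : 2 / 5 < r) (r_lt1 : r < 1).

Lemma pp_gt0 : 0 < p.
Proof. by rewrite /pp ceil_gt0; apply: divr_gt0; move: r_gt r_lt1; lra. Qed.

Lemma nzerosE j : (nzeros j)%:R = p%:~R - (alpha_digit r j)%:~R :> R.
Proof.
rewrite /nzeros -rmorphB /= -[X in _ = X%:~R]gez0_abs //.
by have := pp_gt0; have := alpha_digit_01 j; lia.
Qed.

Lemma wcountE j : (wcount j)%:R = p%:~R * (2 ^+ j - 1) - (alpha_floor j)%:~R :> R.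
Proof.
elim: j => [|j IH]; first by rewrite alpha_floor0 expr0 subrr mulr0 subr0.
rewrite /= natrD natrM IH nzerosE alpha_floorS (intrD _ (2 * _)) intrM exprS; ring.
Qed.

Lemma size_wblockE j :
  (size (wblock r j))%:R = (5 + p%:~R) * (2 ^+ j - 1) - (alpha_floor j)%:~R :> R.
Proof.
elim: j => [|j IH]; first by rewrite alpha_floor0 expr0 subrr mulr0 subr0.
rewrite wblockS !size_cat !natrD IH size_nseq nzerosE alpha_floorS.
by rewrite (intrD _ (2 * _)) intrM exprS /=; ring.
Qed.

Local Notation rho := ((5 * r - 2) / 3 : R).

Lemma rho_01 : 0 <= rho <= 1.
Proof. by apply/andP; split; move: r_gt r_lt1; lra. Qed.

Lemma wcount_dev j : `|(wcount j)%:R - rho * (size (wblock r j))%:R| <= 1.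
Proof.
set F : R := (alpha_floor j)%:~R.
have -> : (wcount j)%:R - rho * (size (wblock r j))%:R
          = (1 - rho) * ((2 ^+ j - 1) * alpha r - F).
  (* 1 - rho = 5 (1 - r) / 3 and alpha = p - (5r - 2) / (1 - r) cancel the p-terms. *)
  rewrite wcountE size_wblockE /alpha -/F; field; move: r_lt1; lra.
have /andP[F_le F_gt] := alpha_floor_bounds j; have /andP[a_ge0 a_lt1] := alpha_itv.
have /andP[rho_ge0 rho_le1] := rho_01.
rewrite ler_norml; apply/andP; split; nra.
Qed.

Lemma size_spacer_le j : (size (spacer (nzeros j)))%:R <= 5 + p%:~R :> R.
Proof.
rewrite size_cat size_nseq natrD nzerosE lerD2l lerBlDr lerDl ler0z.
by case/andP: (alpha_digit_01 j).
Qed.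

Definition Pdev (n : nat) (s : seq nat) : R := (Pcount n s)%:R - rho * n%:R.

Lemma PdevD m n s : Pdev (m + n) s = Pdev m s + Pdev n (drop m s).
Proof. by rewrite /Pdev PcountD !natrD; ring. Qed.

Lemma Pdev_norm_le n s : `|Pdev n s| <= n%:R.
Proof.
have /andP[rho_ge0 rho_le1] := rho_01.
have c_le : (Pcount n s)%:R <= n%:R :> R by rewrite ler_nat Pcount_le.
have c_ge0 : 0 <= (Pcount n s)%:R :> R by [].
rewrite /Pdev ler_norml; apply/andP; split; nra.
Qed.

Lemma Pdev_wblock j s :
  starts0101 s -> `|Pdev (size (wblock r j)) (wblock r j ++ s)| <= 1.
Proof. by move=> s0101; rewrite /Pdev Pcount_wblock //; apply: wcount_dev. Qed.

Lemma Pdev_wblock_prefix j n s :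
  starts0101 s -> (n <= size (wblock r j))%N ->
  `|Pdev n (wblock r j ++ s)| <= (7 + p%:~R) * (1 + trunc_log 2 n)%:R.
Proof.
have K_ge1 : 1 <= 7 + p%:~R :> R by have := pp_gt0; rewrite -(ltr0z R); lra.
elim: j n s => [|j IH] n s s0101.
  rewrite leqn0 => /eqP ->; rewrite /Pdev /Pcount /= mulr0 subr0 normr0.
  by apply: mulr_ge0; [lra | rewrite ler0n].
set W := wblock r j; set T := spacer (nzeros j.+1).
rewrite wblockS -/W -/T -2!catA => n_le.
have sT : starts0101 (T ++ s) by apply: starts0101_spacer.
have sWT : starts0101 (W ++ T ++ s) by apply: starts0101_wblock.
have dW : `|Pdev (size W) (W ++ W ++ T ++ s)| <= 1 by apply: Pdev_wblock.
case: (leqP n (size W)) => [n_le_W | W_lt_n]; first exact: IH.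
have [m n_eq] : exists m, n = (size W + m)%N by exists (n - size W)%N; lia.
subst n; rewrite PdevD drop_size_cat //.
apply: le_trans (ler_normD _ _) _.
case: (leqP m (size W)) => [m_le_W | W_lt_m].
  have lg : (1 + trunc_log 2 m)%:R + 1 <= (1 + trunc_log 2 (size W + m))%:R :> R.
    rewrite natr1 ler_nat !add1n ltnS; apply: trunc_log2_lt; lia.
  have IHm : `|Pdev m (W ++ T ++ s)| <= (7 + p%:~R) * (1 + trunc_log 2 m)%:R.
    exact: IH.
  nra.
have [k m_eq] : exists k, m = (size W + k)%N by exists (m - size W)%N; lia.
subst m; rewrite PdevD drop_size_cat //.
apply: le_trans (lerD (lexx _) (ler_normD _ _)) _.
have dW' : `|Pdev (size W) (W ++ T ++ s)| <= 1 by apply: Pdev_wblock.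
have k_le : k%:R <= 5 + p%:~R :> R.
  apply: le_trans (size_spacer_le j.+1); rewrite ler_nat.
  by move: n_le; rewrite !size_cat; lia.
have L_ge1 : 1 <= (1 + trunc_log 2 (size W + (size W + k)))%:R :> R by rewrite ler1n.
have := Pdev_norm_le k (T ++ s); nra.
Qed.

Lemma cardP_wprefix_dev n :
  `|(cardP (wprefix r n))%:R - rho * n%:R| <= (11 + p%:~R) * (1 + trunc_log 2 n)%:R.
Proof.
have n_le := size_wblock_ge n.
set s := wblock r n ++ [:: 0; 1; 0; 1]%N.
have dev : `|Pdev n s| <= (7 + p%:~R) * (1 + trunc_log 2 n)%:R.
  by apply: Pdev_wblock_prefix => //; exists [::].
have -> : cardP (wprefix r n) = Pcount n (take n s).
  by rewrite wprefix_take cardP_Pcount size_takel // /s takel_cat.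
have /andP[lo hi] := Pcount_take n s.
have L_ge1 : 1 <= (1 + trunc_log 2 n)%:R :> R by rewrite ler1n.
move: lo hi; rewrite -!(ler_nat R) natrD => lo hi.
move: dev; rewrite /Pdev !ler_norml => /andP[dev_lo dev_hi].
apply/andP; split; nra.
Qed.

End LimitWord.

Theorem lemma4p15 (R : realType) (r : R) (hr1 : 2 / 5 < r) (hr2 : r < 1) :
  (fun n : nat => (cardP (wprefix r n))%:R / n%:R : R) @ \oo --> ((5 * r - 2) / 3 : R).
Proof. exact: cvg_div_of_log_dev (cardP_wprefix_dev _ _ hr1 hr2). Qed.
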